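(* For each quantile level $\alpha$, let $q_t^{\alpha}=b_t^{\alpha}+\theta_t^{\alpha}$ be the Quantile Tracker iterate obtained via $\theta_{t+1}^{\alpha}=\theta_t^{\alpha}-\eta(\mathbb{1}\{y_t\le q_t^{\alpha}\}-\alpha)$ from any initial offset $\theta_1^{\alpha}$ and learning rate $\eta>0$, and let $[\hat q_t^{\alpha_1},\dots,\hat q_t^{\alpha_{|\mathcal{A}|}}]=m([q_t^{\alpha_1},\dots,q_t^{\alpha_{|\mathcal{A}|}}])$, where $m:\mathbb{R}^{|\mathcal{A}|}\to\mathbb{R}^{|\mathcal{A}|}$ produces a vector with nondecreasing entries. For both $m=\textsc{Sort}$ and $m=\Pi_{\mathcal{K}}$, there exist a set of levels $\mathcal{A}$ and a sequence $(y_t,b_t)$ with $|y_t-b_t^{\alpha}|<R$ for all $\alpha,t$ (for some $R>0$) such that for some $\alpha\in\mathcal{A}$, $\lim_{T\to\infty}\frac1T\sum_{t=1}^T\mathbb{1}\{y_t\le\hat q_t^{\alpha}\}\ne\alpha$.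
   Context: $\mathcal{A}=\{\alpha_1<\dots<\alpha_{|\mathcal{A}|}\}\subset(0,1)$ is a set of quantile levels; base forecasts $b_t\in\mathcal{K}$ where $\mathcal{K}=\{x\in\mathbb{R}^{|\mathcal{A}|}:x_1\le\dots\le x_{|\mathcal{A}|}\}$. $\textsc{Sort}(v)$ is the vector whose $i$-th entry is the $i$-th smallest entry of $v$; $\Pi_{\mathcal{K}}$ is Euclidean projection onto $\mathcal{K}$ (isotonic regression). *)

From HB Require Import structures.
From mathcomp Require Import all_boot all_order all_algebra.
From mathcomp Require Import all_classical all_reals all_analysis.
Set Implicit Arguments. Unset Strict Implicit. Unset Printing Implicit Defensive.
Import Order.TTheory GRing.Theory Num.Theory.
Import numFieldNormedType.Exports.
Local Open Scope classical_set_scope.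
Local Open Scope ring_scope.

Section QT.
Variable R : realType.

Definition levels (n : nat) (a : 'I_n -> R) : Prop :=
  (forall i, 0 < a i < 1) /\ (forall i j : 'I_n, (i < j)%N -> a i < a j).

Definition inK (n : nat) (v : 'I_n -> R) : Prop :=
  forall i j : 'I_n, (i <= j)%N -> v i <= v j.

Definition sortv (n : nat) (v : 'I_n -> R) : 'I_n -> R :=
  fun i => nth 0 (sort (fun x y : R => x <= y) [seq v j | j <- enum 'I_n]) i.

Definition is_isoproj (n : nat) (v p : 'I_n -> R) : Prop :=
  inK p /\ forall x, inK x ->
    \sum_(i < n) (v i - p i) ^+ 2 <= \sum_(i < n) (v i - x i) ^+ 2.

(* Quantile Tracker offsets; index t corresponds to time t+1 *)
Fixpoint qt_theta (n : nat) (a : 'I_n -> R) (eta : R)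
    (y : nat -> R) (b : nat -> 'I_n -> R) (th1 : 'I_n -> R) (t : nat)
    : 'I_n -> R :=
  match t with
  | 0 => th1
  | t'.+1 => fun i =>
      let th := qt_theta a eta y b th1 t' in
      th i - eta * ((nat_of_bool (y t' <= b t' i + th i))%:R - a i)
  end.

Definition qt_q n (a : 'I_n -> R) (eta : R) (y : nat -> R)
    (b : nat -> 'I_n -> R) (th1 : 'I_n -> R) (t : nat) : 'I_n -> R :=
  fun i => b t i + qt_theta a eta y b th1 t i.

Definition coverage n (a : 'I_n -> R) (m : ('I_n -> R) -> ('I_n -> R))
    (eta : R) (y : nat -> R) (b : nat -> 'I_n -> R) (th1 : 'I_n -> R)
    (i : 'I_n) : nat -> R :=
  fun N => (N.+1%:R)^-1 *
    \sum_(t < N.+1) (nat_of_bool (y t <= m (qt_q a eta y b th1 t) i))%:R.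

Definition fails_for n (a : 'I_n -> R) (m : ('I_n -> R) -> ('I_n -> R))
    (eta : R) (th1 : 'I_n -> R) : Prop :=
  exists (y : nat -> R) (b : nat -> 'I_n -> R),
    (forall t, inK (b t)) /\
    (exists Rb : R, 0 < Rb /\ forall t i, `|y t - b t i| < Rb) /\
    exists i : 'I_n, ~ (coverage a m eta y b th1 i @ \oo --> a i).

End QT.

From HB Require Import structures.
From mathcomp Require Import all_boot all_order all_algebra.
From mathcomp Require Import all_classical all_reals all_analysis.
From mathcomp Require Import ring lra.
Set Implicit Arguments.
Unset Strict Implicit.
Unset Printing Implicit Defensive.
Import Order.TTheory GRing.Theory Num.Theory.
Import numFieldNormedType.Exports.
Local Open Scope ring_scope.

(* Two levels 1/3 < 2/3 suffice, against an adversary that watches the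
   tracker offsets th.  When they are crossed (th_hi < th_lo) it takes
   b_t = 0 and y_t the midpoint of th, so only the lower level is hit;
   otherwise it takes b_t = (0, 1) and y_t = th_hi + 1, the upper raw
   quantile, so only the upper level is hit.  Either way the sum of the
   offsets is conserved and their difference stays bounded, so the data stay
   bounded.  But y_t never exceeds the top entry of Sort or of the isotonic
   projection: both are at least the midpoint of a crossed pair and keep the
   top entry of a sorted pair.  So the upper post-processed level is covered
   at every step, and its coverage is 1, not 2/3. *)

Section PostProcessing.
Variable R : realType.

Lemma sortv_le_last n (v : 'I_n.+1 -> R) j : v j <= sortv v ord_max.
Proof.
rewrite /sortv; set s := sort _ _.
have s_sorted : sorted <=%R s by apply: sort_sorted; exact: le_total.
have size_s : size s = n.+1 by rewrite size_sort size_map size_enum_ord.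
have vj_in_s : v j \in s by rewrite mem_sort map_f ?mem_enum.
rewrite -(nth_index 0 vj_in_s).
apply: (sorted_leq_nth le_trans lexx 0 s_sorted); rewrite ?inE ?size_s //.
- by rewrite -size_s index_mem.
- by rewrite -ltnS -size_s index_mem.
Qed.

Lemma isoproj_id n (v p : 'I_n -> R) : is_isoproj v p -> inK v -> p = v.
Proof.
move=> [_ p_min] vK; apply/funext => i; apply/eqP.
rewrite eq_sym -subr_eq0 -sqrf_eq0; apply/eqP.
have dist_le0 : \sum_(k < n) (v k - p k) ^+ 2 <= 0.
  by apply: le_trans (p_min v vK) _; rewrite big1 // => k _; rewrite subrr expr0n.
apply: (@psumr_eq0P _ _ xpredT (fun k => (v k - p k) ^+ 2)) => // [k _|].
  exact: sqr_ge0.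
by apply/eqP; rewrite eq_le dist_le0 sumr_ge0 // => k _; exact: sqr_ge0.
Qed.

Lemma coverage_full n (a : 'I_n -> R) m eta y b th1 i :
  (forall t, y t <= m (qt_q a eta y b th1 t) i) ->
  coverage a m eta y b th1 i = fun=> 1.
Proof.
move=> covered; apply/funext => N; rewrite /coverage.
rewrite (eq_bigr (fun=> 1)) => [|t _]; last by rewrite covered.
by rewrite sumr_const card_ord mulVf // pnatr_eq0.
Qed.

Lemma cvg_cst_eq (c l : R) : ((fun=> c) @ \oo --> l)%classic -> c = l.
Proof. by move=> /cvg_lim <-; [rewrite lim_cst | exact: Rhausdorff]. Qed.

End PostProcessing.

Section TwoLevels.
Variable R : realType.

Definition lo : 'I_2 := ord0.
Definition hi : 'I_2 := ord_max.

Lemma ord2P (i : 'I_2) : i = lo \/ i = hi.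
Proof. by case: i => [[|[|k]] lt_i2]; [left|right|]; try apply/val_inj. Qed.

Lemma big_ord2 (f : 'I_2 -> R) : \sum_(i < 2) f i = f lo + f hi.
Proof. by rewrite !big_ord_recl big_ord0 addr0; congr (_ + f _); apply/val_inj. Qed.

Lemma inK2 (x : 'I_2 -> R) : x lo <= x hi -> inK x.
Proof. by move=> x_le i j; case: (ord2P i) => ->; case: (ord2P j) => ->. Qed.

Lemma isoproj2_ge_mean (v p : 'I_2 -> R) :
  is_isoproj v p -> v hi < v lo -> (v lo + v hi) / 2 <= p hi.
Proof.
move=> [pK p_min] v_crossed; set c := (v lo + v hi) / 2.
have := p_min (fun=> c) (inK2 (lexx c)); rewrite !big_ord2.
have := pK lo hi isT; rewrite /c.
move: (v lo) (v hi) (p lo) (p hi) v_crossed => u w r s; nra.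
Qed.

Definition thirds : 'I_2 -> R := fun i => i.+1%:R / 3.

Lemma levels_thirds : levels thirds.
Proof.
split=> [i|i j]; first by case: (ord2P i) => ->; rewrite /thirds /=; lra.
by case: (ord2P i) => ->; case: (ord2P j) => -> //= _; rewrite /thirds /=; lra.
Qed.

End TwoLevels.

Section Adversary.
Variables (R : realType) (eta : R) (th1 : 'I_2 -> R).

Definition crossed (th : 'I_2 -> R) : bool := th hi < th lo.

Definition adv_y (th : 'I_2 -> R) : R :=
  if crossed th then (th lo + th hi) / 2 else th hi + 1.

Definition adv_b (th : 'I_2 -> R) (i : 'I_2) : R :=
  if crossed th then 0 else (i == hi)%:R.

Definition adv_hit (th : 'I_2 -> R) (i : 'I_2) : bool :=
  if crossed th then i == lo else i == hi.

Lemma adv_hitE th i : (adv_y th <= adv_b th i + th i) = adv_hit th i.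
Proof.
rewrite /adv_y /adv_b /adv_hit /crossed.
case: ltP => th_crossed; case: (ord2P i) => ->; rewrite ?eqxx //= ?add0r ?addr0.
- by apply/idP; lra.
- by apply/negbTE; rewrite -ltNge; lra.
- by apply/negbTE; rewrite -ltNge; lra.
- by apply/idP; lra.
Qed.

Fixpoint adv_theta (t : nat) : 'I_2 -> R :=
  if t is t'.+1 then fun i =>
    adv_theta t' i - eta * ((adv_hit (adv_theta t') i)%:R - thirds R i)
  else th1.

Definition adv_ys (t : nat) : R := adv_y (adv_theta t).
Definition adv_bs (t : nat) : 'I_2 -> R := adv_b (adv_theta t).

Lemma qt_theta_adv t : qt_theta (thirds R) eta adv_ys adv_bs th1 t = adv_theta t.
Proof. by elim: t => //= t IHt; apply/funext => i; rewrite IHt -adv_hitE. Qed.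

Lemma adv_theta_S_crossed t : crossed (adv_theta t) ->
  adv_theta t.+1 lo = adv_theta t lo - eta * (2 / 3) /\
  adv_theta t.+1 hi = adv_theta t hi + eta * (2 / 3).
Proof. by move=> th_crossed; rewrite /= /adv_hit th_crossed /thirds /=; split; lra. Qed.

Lemma adv_theta_S_uncrossed t : ~~ crossed (adv_theta t) ->
  adv_theta t.+1 lo = adv_theta t lo + eta / 3 /\
  adv_theta t.+1 hi = adv_theta t hi - eta / 3.
Proof.
by move=> /negbTE th_uncrossed; rewrite /= /adv_hit th_uncrossed /thirds /=; split; lra.
Qed.

Lemma adv_theta_sum t : adv_theta t lo + adv_theta t hi = th1 lo + th1 hi.
Proof.
elim: t => // t IHt; case: (boolP (crossed (adv_theta t))).
  by move=> /adv_theta_S_crossed [-> ->]; lra.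
by move=> /adv_theta_S_uncrossed [-> ->]; lra.
Qed.

(* Each step moves the difference towards 0 (by 4 eta / 3 when crossed, by
   2 eta / 3 otherwise), so it overshoots 0 by less than 2 eta. *)
Lemma adv_theta_diff : 0 < eta -> forall t,
  `|adv_theta t lo - adv_theta t hi| <= `|th1 lo - th1 hi| + 2 * eta.
Proof.
move=> eta_gt0; elim=> [|t]; first by rewrite lerDl mulr_ge0 // ltW.
have := normr_ge0 (th1 lo - th1 hi); rewrite !ler_norml.
case: (boolP (crossed (adv_theta t))) => [th_crossed|th_uncrossed].
- case: (adv_theta_S_crossed th_crossed) => -> ->; move: th_crossed; rewrite /crossed.
  by move=> lt_hi_lo d0_ge0 /andP [diff_ge diff_le]; apply/andP; split; lra.
- case: (adv_theta_S_uncrossed th_uncrossed) => -> ->; move: th_uncrossed.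
  rewrite /crossed -leNgt.
  by move=> le_lo_hi d0_ge0 /andP [diff_ge diff_le]; apply/andP; split; lra.
Qed.

Lemma adv_gap_bounded : 0 < eta ->
  exists Rb : R, 0 < Rb /\ forall t i, `|adv_ys t - adv_bs t i| < Rb.
Proof.
move=> eta_gt0; set S := th1 lo + th1 hi; set C := `|th1 lo - th1 hi| + 2 * eta.
have S_bounds : - `|S| <= S <= `|S| by rewrite -ler_norml.
have d0_ge0 := normr_ge0 (th1 lo - th1 hi).
exists (`|S| + C + 2); split=> [|t i]; first by rewrite /C; lra.
have := adv_theta_sum t; have := adv_theta_diff eta_gt0 t; rewrite -/S -/C ler_norml.
rewrite ltr_norml /adv_ys /adv_bs /adv_y /adv_b /crossed.
move: S_bounds (adv_theta t lo) (adv_theta t hi) => /andP [S_ge S_le] u w.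
move=> /andP [diff_ge diff_le] sum_uw.
by case: (ord2P i) => ->; case: ifP => _; rewrite ?eqxx //=; apply/andP; split; lra.
Qed.

Lemma adv_y_le_top (m : ('I_2 -> R) -> 'I_2 -> R) th :
  (forall v, crossed v -> (v lo + v hi) / 2 <= m v hi) ->
  (forall v, v lo <= v hi -> v hi <= m v hi) ->
  adv_y th <= m (fun i => adv_b th i + th i) hi.
Proof.
move=> m_crossed m_sorted; rewrite /adv_y; set q := fun i => _ + _.
case: ifP => th_crossed.
  have q_th : q = th by apply/funext => i; rewrite /q /adv_b th_crossed add0r.
  by rewrite q_th; exact: m_crossed.
have q_sorted : q lo <= q hi.
  by rewrite /q /adv_b th_crossed /=; move/negbT: th_crossed; rewrite -leNgt; lra.
by apply: le_trans (m_sorted q q_sorted); rewrite /q /adv_b th_crossed /= addrC.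
Qed.

Lemma adv_fails (m : ('I_2 -> R) -> 'I_2 -> R) : 0 < eta ->
  (forall v, crossed v -> (v lo + v hi) / 2 <= m v hi) ->
  (forall v, v lo <= v hi -> v hi <= m v hi) ->
  fails_for (thirds R) m eta th1.
Proof.
move=> eta_gt0 m_crossed m_sorted; exists adv_ys, adv_bs; split.
  by move=> t; apply: inK2; rewrite /adv_bs /adv_b; case: ifP => _ /=; lra.
split; first exact: adv_gap_bounded.
exists hi; rewrite coverage_full => [/cvg_cst_eq|t]; first by rewrite /thirds /=; lra.
by rewrite /qt_q qt_theta_adv; exact: adv_y_le_top.
Qed.

End Adversary.

Theorem proposition2 (R : realType) :
  (forall eta : R, 0 < eta ->
     exists (n : nat) (a : 'I_n -> R), levels a /\
       forall th1 : 'I_n -> R, fails_for a (@sortv R n) eta th1) /\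
  (forall eta : R, 0 < eta ->
     exists (n : nat) (a : 'I_n -> R), levels a /\
       forall m : ('I_n -> R) -> ('I_n -> R),
         (forall v, is_isoproj v (m v)) ->
         forall th1 : 'I_n -> R, fails_for a m eta th1).
Proof.
split=> eta eta_gt0; exists 2%N, (thirds R); (split; first exact: levels_thirds).
- move=> th1; apply: adv_fails => // v _; last exact: sortv_le_last.
  by have := sortv_le_last v lo; have := sortv_le_last v hi; lra.
- move=> m m_proj th1; apply: adv_fails => // v; first exact: isoproj2_ge_mean.
  by move=> v_sorted; rewrite (isoproj_id (m_proj v) (inK2 v_sorted)).
Qed.
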